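(* Let $\Phi$ be an Orlicz function and $p$ a lattice norm on $\mathbb{R}^2$ with $p((1,0))=p((0,1))=1$. If $x\in L^\Phi(\mu)$ satisfies $I_\Phi(\lambda x)=+\infty$ for every $\lambda>1$, then $$1\le \|x\|_{\Phi,p}\le 1+I_\Phi(x).$$
   Context: $(\Omega,\Sigma,\mu)$ is a $\sigma$-finite complete measure space, $L^0$ the space of (classes of a.e. equal) real measurable functions. An Orlicz function is a function $\Phi:\mathbb{R}\to[0,\infty)$ which is convex, even, vanishes at $0$ and is not identically zero. $I_\Phi(x)=\int_\Omega\Phi(x(t))\,d\mu\in[0,+\infty]$; $L^\Phi(\mu)=\{x\in L^0: I_\Phi(\lambda x)<\infty\text{ for some }\lambda>0\}$. A lattice norm on $\mathbb{R}^2$ is a norm $p$ with $p((u,v))\le p((u',v'))$ whenever $|u|\le|u'|,|v|\le|v'|$. For such $p$ with $p((1,0))=1$, $\|x\|_{\Phi,p}=\inf_{k>0}\frac1k p((1,I_\Phi(kx)))$ for $x\in L^\Phi(\mu)$, with the convention $p((1,+\infty))=+\infty$. *)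

From Stdlib Require Import Reals Lra List ClassicalEpsilon.
Open Scope R_scope.

Inductive ER : Type := Fin (r : R) | PInf.

Definition ER_le (a b : ER) : Prop :=
  match a, b with
  | Fin x, Fin y => x <= y
  | _, PInf => True
  | PInf, Fin _ => False
  end.

Definition ER_add (a b : ER) : ER :=
  match a, b with
  | Fin x, Fin y => Fin (x + y)
  | _, _ => PInf
  end.

(* scalar multiplication by c >= 0, with the convention 0 * (+oo) = 0 *)
Definition ER_scal (c : R) (a : ER) : ER :=
  match a with
  | Fin x => Fin (c * x)
  | PInf => if Req_EM_T c 0 then Fin 0 else PInf
  end.

(* supremum of a nonempty bounded-above set of reals (0 otherwise) *)
Definition real_sup (E : R -> Prop) : R :=
  match excluded_middle_informative (bound E /\ exists x, E x) with
  | left H => proj1_sig (completeness E (proj1 H) (proj2 H))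
  | right _ => 0
  end.

(* supremum in [0,+oo] of a set of elements of [0,+oo] (empty sup = 0) *)
Definition ER_sup (S : ER -> Prop) : ER :=
  match excluded_middle_informative (S PInf \/ ~ bound (fun r => S (Fin r))) with
  | left _ => PInf
  | right _ => Fin (real_sup (fun r => S (Fin r)))
  end.

(* infimum in [0,+oo] of a set of elements of [0,+oo] (empty inf = +oo);
   only meaningful for sets of nonnegative values, which is the only use. *)
Definition ER_inf (S : ER -> Prop) : ER :=
  match excluded_middle_informative (exists r, S (Fin r)) with
  | left _ => Fin (- real_sup (fun r => S (Fin (- r))))
  | right _ => PInf
  end.

Fixpoint ER_partial (a : nat -> ER) (n : nat) : ER :=
  match n with
  | O => Fin 0
  | S m => ER_add (ER_partial a m) (a m)
  end.

Definition ER_series (a : nat -> ER) : ER :=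
  ER_sup (fun e => exists n, e = ER_partial a n).

Record measure_space (Omega : Type) := {
  measurable : (Omega -> Prop) -> Prop;
  mu : (Omega -> Prop) -> ER;
  meas_empty : measurable (fun _ => False);
  meas_compl : forall A, measurable A -> measurable (fun t => ~ A t);
  meas_union : forall A : nat -> Omega -> Prop,
      (forall n, measurable (A n)) -> measurable (fun t => exists n, A n t);
  mu_nonneg : forall A, ER_le (Fin 0) (mu A);
  mu_empty : mu (fun _ => False) = Fin 0;
  mu_sigma_additive : forall A : nat -> Omega -> Prop,
      (forall n, measurable (A n)) ->
      (forall n m t, n <> m -> A n t -> A m t -> False) ->
      mu (fun t => exists n, A n t) = ER_series (fun n => mu (A n));
  sigma_finite : exists A : nat -> Omega -> Prop,
      (forall n, measurable (A n) /\ mu (A n) <> PInf) /\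
      (forall t, exists n, A n t);
  mu_complete : forall A B, measurable B -> mu B = Fin 0 ->
      (forall t, A t -> B t) -> measurable A
}.
Arguments measurable {Omega} _ _.
Arguments mu {Omega} _ _.

(* real measurable functions (elements of L^0; we work with representatives,
   all notions below are invariant under a.e. equality) *)
Definition measurable_fun {Omega} (M : measure_space Omega) (x : Omega -> R) : Prop :=
  forall a : R, measurable M (fun t => a < x t).

Definition indic {Omega} (A : Omega -> Prop) (t : Omega) : R :=
  if excluded_middle_informative (A t) then 1 else 0.

Definition simple_val {Omega} (l : list (R * (Omega -> Prop))) (t : Omega) : R :=
  fold_right (fun ca acc => fst ca * indic (snd ca) t + acc) 0 l.

Definition simple_int {Omega} (M : measure_space Omega)
  (l : list (R * (Omega -> Prop))) : ER :=
  fold_right (fun ca acc => ER_add (ER_scal (fst ca) (mu M (snd ca))) acc) (Fin 0) l.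

Definition simple_ok {Omega} (M : measure_space Omega)
  (l : list (R * (Omega -> Prop))) : Prop :=
  forall ca, In ca l -> 0 <= fst ca /\ measurable M (snd ca).

Definition integral {Omega} (M : measure_space Omega) (g : Omega -> R) : ER :=
  ER_sup (fun e => exists l, simple_ok M l /\
            (forall t, simple_val l t <= g t) /\ e = simple_int M l).

Definition orlicz_function (Phi : R -> R) : Prop :=
  (forall u, 0 <= Phi u) /\
  (forall u v t, 0 <= t <= 1 ->
     Phi (t * u + (1 - t) * v) <= t * Phi u + (1 - t) * Phi v) /\
  (forall u, Phi (- u) = Phi u) /\
  Phi 0 = 0 /\
  (exists u, Phi u <> 0).

Definition I_Phi {Omega} (M : measure_space Omega) (Phi : R -> R)
  (x : Omega -> R) : ER :=
  integral M (fun t => Phi (x t)).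

Definition in_LPhi {Omega} (M : measure_space Omega) (Phi : R -> R)
  (x : Omega -> R) : Prop :=
  measurable_fun M x /\
  exists lam, 0 < lam /\ I_Phi M Phi (fun t => lam * x t) <> PInf.

Definition lattice_norm (p : R * R -> R) : Prop :=
  (forall u v, p (u, v) = 0 -> u = 0 /\ v = 0) /\
  (forall c u v, p (c * u, c * v) = Rabs c * p (u, v)) /\
  (forall u v u' v', p (u + u', v + v') <= p (u, v) + p (u', v')) /\
  (forall u v u' v', Rabs u <= Rabs u' -> Rabs v <= Rabs v' ->
     p (u, v) <= p (u', v')).

Definition p_ext (p : R * R -> R) (s : ER) : ER :=
  match s with
  | Fin v => Fin (p (1, v))
  | PInf => PInf
  end.

Definition orlicz_norm {Omega} (M : measure_space Omega) (Phi : R -> R)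
  (p : R * R -> R) (x : Omega -> R) : ER :=
  ER_inf (fun e => exists k, 0 < k /\
            e = ER_scal (/ k) (p_ext p (I_Phi M Phi (fun t => k * x t)))).

(** A scale [k > 1] makes the modular infinite, so only scales [k <= 1] contribute
    to the infimum, and each contributes [p(1, I(kx))/k >= p(1,0) = 1].  The scale
    [k = 1] gives the upper bound [p(1, I(x)) <= p(1,0) + I(x) p(0,1) = 1 + I(x)]. *)
From Stdlib Require Import Reals Lra ClassicalEpsilon FunctionalExtensionality.
Open Scope R_scope.

Lemma real_sup_is_lub (E : R -> Prop) (x : R) :
  bound E -> E x -> is_lub E (real_sup E).
Proof.
  intros Hb Hx. unfold real_sup.
  destruct (excluded_middle_informative _) as [H|H].
  - destruct (completeness E _ _) as [s Hs]. exact Hs.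
  - exfalso. apply H. split; eauto.
Qed.

Lemma ER_inf_ge (S : ER -> Prop) (a : R) :
  (forall r, S (Fin r) -> a <= r) -> ER_le (Fin a) (ER_inf S).
Proof.
  intros Ha. unfold ER_inf.
  destruct (excluded_middle_informative _) as [[r Hr]|_]; simpl; [|exact I].
  assert (Hr' : S (Fin (- - r))) by (rewrite Ropp_involutive; exact Hr).
  assert (Hb : bound (fun r => S (Fin (- r)))).
  { exists (- a). intros s Hs. apply Ha in Hs. lra. }
  destruct (real_sup_is_lub _ _ Hb Hr') as [_ Hleast].
  assert (real_sup (fun r => S (Fin (- r))) <= - a).
  { apply Hleast. intros s Hs. apply Ha in Hs. lra. }
  lra.
Qed.

Lemma ER_inf_le (S : ER -> Prop) (a : R) (e : ER) :
  (forall r, S (Fin r) -> a <= r) -> S e -> ER_le (ER_inf S) e.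
Proof.
  intros Ha He. destruct e as [r|]; [|destruct (ER_inf S); exact I].
  unfold ER_inf.
  destruct (excluded_middle_informative _) as [_|Hn]; simpl; [|apply Hn; eauto].
  assert (Hr : S (Fin (- - r))) by (rewrite Ropp_involutive; exact He).
  assert (Hb : bound (fun r => S (Fin (- r)))).
  { exists (- a). intros s Hs. apply Ha in Hs. lra. }
  destruct (real_sup_is_lub _ _ Hb Hr) as [Hupper _].
  apply Hupper in Hr. lra.
Qed.

Lemma ER_le_trans (a b c : ER) : ER_le a b -> ER_le b c -> ER_le a c.
Proof.
  destruct a, b, c; simpl; intros; try lra; try exact I; contradiction.
Qed.

Lemma ER_scal_PInf (c : R) : c <> 0 -> ER_scal c PInf = PInf.
Proof. intros Hc. simpl. destruct (Req_EM_T c 0); [contradiction|reflexivity]. Qed.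

Lemma integral_nonneg {Omega} (M : measure_space Omega) (g : Omega -> R) :
  (forall t, 0 <= g t) -> ER_le (Fin 0) (integral M g).
Proof.
  intros Hg. unfold integral, ER_sup.
  set (E := fun r => exists l, simple_ok M l /\
              (forall t, simple_val l t <= g t) /\ Fin r = simple_int M l).
  destruct (excluded_middle_informative _) as [_|H]; simpl; [exact I|].
  assert (Hb : bound E) by (apply NNPP; intros Hnb; apply H; right; exact Hnb).
  assert (H0 : E 0).
  { exists nil. split; [intros ca []|].
    split; [intros t; apply Hg|reflexivity]. }
  exact (proj1 (real_sup_is_lub E 0 Hb H0) 0 H0).
Qed.

Lemma I_Phi_scal1 {Omega} (M : measure_space Omega) (Phi : R -> R) (x : Omega -> R) :
  I_Phi M Phi (fun t => 1 * x t) = I_Phi M Phi x.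
Proof.
  f_equal. apply functional_extensionality. intros t. ring.
Qed.

Section LatticeNorm.

Variable p : R * R -> R.
Hypothesis p_lattice : lattice_norm p.

Lemma lattice_norm_ge_fst (u v : R) : p (u, 0) <= p (u, v).
Proof.
  apply p_lattice; [apply Rle_refl|rewrite Rabs_R0; apply Rabs_pos].
Qed.

Lemma lattice_norm_le_coord (u v : R) :
  p (u, v) <= Rabs u * p (1, 0) + Rabs v * p (0, 1).
Proof.
  destruct p_lattice as [_ [Phom [Ptri _]]].
  replace (u, v) with (u + 0, 0 + v) by (f_equal; ring).
  eapply Rle_trans; [apply Ptri|].
  replace (u, 0) with (u * 1, u * 0) by (f_equal; ring).
  replace (0, v) with (v * 0, v * 1) by (f_equal; ring).
  rewrite !Phom. lra.
Qed.

End LatticeNorm.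

Lemma p_ext_le_add (p : R * R -> R) (s : ER) :
  lattice_norm p -> p (1, 0) = 1 -> p (0, 1) = 1 -> ER_le (Fin 0) s ->
  ER_le (p_ext p s) (ER_add (Fin 1) s).
Proof.
  intros Hp P10 P01 Hs. destruct s as [v|]; simpl in *; [|exact I].
  pose proof (lattice_norm_le_coord p Hp 1 v) as Hle.
  rewrite P10, P01, Rabs_R1, (Rabs_right v) in Hle by lra. lra.
Qed.

Lemma orlicz_term_ge1 {Omega} (M : measure_space Omega) (Phi : R -> R)
  (p : R * R -> R) (x : Omega -> R) (k r : R) :
  lattice_norm p -> p (1, 0) = 1 ->
  (forall lam, 1 < lam -> I_Phi M Phi (fun t => lam * x t) = PInf) ->
  0 < k -> Fin r = ER_scal (/ k) (p_ext p (I_Phi M Phi (fun t => k * x t))) ->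
  1 <= r.
Proof.
  intros Hp P10 Hinf Hk E.
  assert (Hk0 : / k <> 0) by (apply Rinv_neq_0_compat; lra).
  destruct (Rle_lt_dec k 1) as [Hk1|Hk1].
  - destruct (I_Phi M Phi (fun t => k * x t)) as [v|]; cbn [p_ext] in E;
      [|rewrite ER_scal_PInf in E by exact Hk0; discriminate].
    injection E as ->.
    pose proof (lattice_norm_ge_fst p Hp 1 v) as Hv.
    assert (1 <= / k) by (rewrite <- Rinv_1; apply Rinv_le_contravar; lra).
    nra.
  - rewrite (Hinf k Hk1) in E. cbn [p_ext] in E.
    rewrite ER_scal_PInf in E by exact Hk0. discriminate.
Qed.

Theorem lemma2 (Omega : Type) (M : measure_space Omega) (Phi : R -> R)
  (p : R * R -> R) :
  orlicz_function Phi -> lattice_norm p ->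
  p (1, 0) = 1 -> p (0, 1) = 1 ->
  forall x : Omega -> R, in_LPhi M Phi x ->
  (forall lam, 1 < lam -> I_Phi M Phi (fun t => lam * x t) = PInf) ->
  ER_le (Fin 1) (orlicz_norm M Phi p x) /\
  ER_le (orlicz_norm M Phi p x) (ER_add (Fin 1) (I_Phi M Phi x)).
Proof.
  intros [Phi_nonneg _] Hp P10 P01 x _ Hinf.
  unfold orlicz_norm.
  set (S := fun e => exists k, 0 < k /\
              e = ER_scal (/ k) (p_ext p (I_Phi M Phi (fun t => k * x t)))).
  assert (Hlow : forall r, S (Fin r) -> 1 <= r).
  { intros r [k [Hk E]]. exact (orlicz_term_ge1 M Phi p x k r Hp P10 Hinf Hk E). }
  split; [exact (ER_inf_ge S 1 Hlow)|].
  apply ER_le_trans with (p_ext p (I_Phi M Phi x)).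
  - apply (ER_inf_le S 1 _ Hlow). exists 1. split; [lra|].
    rewrite I_Phi_scal1, Rinv_1. destruct (I_Phi M Phi x); cbn [p_ext].
    + simpl. f_equal. ring.
    + rewrite ER_scal_PInf; [reflexivity|lra].
  - apply p_ext_le_add; auto. apply integral_nonneg. intros t. apply Phi_nonneg.
Qed.
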